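(* Let $N\ge3$ and let $Q$ be a non-degenerate hermitian form on $\mathbb{C}^N$. The only additive subgroups of $\mathbb{C}^N$ invariant under the special unitary group $SU(Q)$ are $\{0\}$ and $\mathbb{C}^N$. *)

(* complex numbers C := R[i] = complex R over a realType R
   (any realType is (isomorphic to) the real numbers). *)
From HB Require Import structures.
From mathcomp Require Import all_boot all_order all_algebra.
From mathcomp Require Import reals.
From mathcomp.real_closed Require Import complex.
Set Implicit Arguments. Unset Strict Implicit. Unset Printing Implicit Defensive.
Import Order.TTheory GRing.Theory Num.Theory.
Local Open Scope ring_scope.

Definition herm_form (C : numClosedFieldType) (n : nat)
  (Q : 'cV[C]_n -> 'cV[C]_n -> C) : Prop :=
  (forall u v w : 'cV[C]_n, forall a : C, Q u (a *: v + w) = a * Q u v + Q u w)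
  /\ (forall u v : 'cV[C]_n, Q v u = (Q u v)^*).

Definition nondegenerate_form (C : numClosedFieldType) (n : nat)
  (Q : 'cV[C]_n -> 'cV[C]_n -> C) : Prop :=
  forall u : 'cV[C]_n, (forall v, Q u v = 0) -> u = 0.

Definition in_SU (C : numClosedFieldType) (n : nat)
  (Q : 'cV[C]_n -> 'cV[C]_n -> C) (g : 'M[C]_n) : Prop :=
  \det g = 1 /\ (forall u v : 'cV[C]_n, Q (g *m u) (g *m v) = Q u v).

Definition additive_subgroup (V : zmodType) (G : V -> Prop) : Prop :=
  G 0 /\ (forall x y, G x -> G y -> G (x - y)).

From mathcomp Require Import all_boot all_order all_algebra.
From mathcomp Require Import boolp reals.
From mathcomp.real_closed Require Import complex.
From mathcomp Require Import ring lra.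
Set Implicit Arguments. Unset Strict Implicit. Unset Printing Implicit Defensive.
Import Order.TTheory GRing.Theory Num.Theory.
Local Open Scope ring_scope.

(* For an anisotropic vector a and |l| = 1, the complex reflection fixing a^perp and
   scaling a by l is Q-unitary of determinant l, so pairing it with a reflection of
   determinant l^* along an anisotropic b orthogonal to a gives an element of SU(Q).
   If G contains u with Q(a, u) != 0, two commutators v |-> g v - v with such pairs,
   along (a, b) and then along (a, c) for a, b, c pairwise orthogonal and anisotropic
   (which needs N >= 3), leave (m - 1)(l - 1) Q(a, u) / Q(a, a) a in G for all unimodular
   l, m. These scalars generate C as an additive group, so G contains the line C a.
   Moving a little from one anisotropic vector to another then puts every anisotropic
   line in G, and every vector is a difference of two anisotropic ones. *)

Section AdditiveSubgroup.
Variables (V : zmodType) (G : V -> Prop).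
Hypothesis hG : additive_subgroup G.

Lemma subgroup0 : G 0. Proof. exact: hG.1. Qed.

Lemma subgroupB x y : G x -> G y -> G (x - y). Proof. exact: hG.2. Qed.

Lemma subgroupN x : G x -> G (- x).
Proof. by move=> Gx; rewrite -sub0r; apply: (subgroupB subgroup0 Gx). Qed.

Lemma subgroupD x y : G x -> G y -> G (x + y).
Proof. by move=> Gx /subgroupN; rewrite -[y in G (_ + y)]opprK; apply: subgroupB. Qed.

Lemma subgroupMn x k : G x -> G (x *+ k).
Proof.
move=> Gx; elim: k => [|k IHk]; first by rewrite mulr0n; apply: subgroup0.
by rewrite mulrS; apply: subgroupD.
Qed.

End AdditiveSubgroup.

Lemma det1D_rank1 (R : comPzRingType) (n : nat) (c : 'cV[R]_n) (r : 'rV[R]_n) :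
  \det (1%:M + c *m r) = 1 + (r *m c) 0 0.
Proof.
(* factor the block matrix [1, -r; c, 1] in two ways *)
have lower : block_mx (1%:M : 'M_1) (- r) c 1%:M =
    block_mx 1%:M 0 c 1%:M *m block_mx 1%:M (- r) 0 (1%:M + c *m r).
  rewrite mulmx_block !(mul1mx, mul0mx, mulmx1, mulmx0, addr0, add0r) mulmxN.
  by rewrite addrC addrK.
have upper : block_mx (1%:M : 'M_1) (- r) c 1%:M =
    block_mx (1%:M + r *m c) (- r) 0 1%:M *m block_mx 1%:M 0 c 1%:M.
  rewrite mulmx_block !(mul1mx, mul0mx, mulmx1, mulmx0, addr0, add0r) mulNmx.
  by rewrite addrK.
have := congr1 determinant lower; rewrite upper !det_mulmx det_lblock !det_ublock.
by rewrite !det1 !(mul1r, mulr1) det_mx11 !mxE eqxx mulr1n => <-.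
Qed.

Lemma leq_dim_span2 (F : fieldType) (n : nat) (a b : 'cV[F]_n) :
  (forall x, exists al be, x = al *: a + be *: b) -> (n <= 2)%N.
Proof.
move=> span; have := submx_refl (col_mx a^T b^T); rewrite col_mx_sub => /andP[aS bS].
have sub1 : (1%:M <= col_mx a^T b^T)%MS.
  apply/row_subP => i; rewrite row1 -trmx_delta.
  have [al [be ->]] := span (delta_mx i 0).
  by rewrite linearD !linearZ /= addmx_sub ?scalemx_sub.
by rewrite -(mxrank1 F n); apply: leq_trans (mxrankS sub1) (rank_leq_row _).
Qed.

Section HermitianForm.
Variables (C : numClosedFieldType) (n : nat) (Q : 'cV[C]_n -> 'cV[C]_n -> C).
Hypothesis hQ : herm_form Q.

Lemma hformC u v : Q v u = (Q u v)^*. Proof. exact: hQ.2. Qed.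

Lemma hformDr u v w : Q u (v + w) = Q u v + Q u w.
Proof. by have := hQ.1 u v w 1; rewrite scale1r mul1r. Qed.

Lemma hform0r u : Q u 0 = 0.
Proof. by apply: (addrI (Q u 0)); rewrite -hformDr !addr0. Qed.

Lemma hformZr u a v : Q u (a *: v) = a * Q u v.
Proof. by have := hQ.1 u v 0 a; rewrite !addr0 hform0r addr0. Qed.

Lemma hformNr u v : Q u (- v) = - Q u v.
Proof. by rewrite -scaleN1r hformZr mulN1r. Qed.

Lemma hformBr u v w : Q u (v - w) = Q u v - Q u w.
Proof. by rewrite hformDr hformNr. Qed.

Lemma hformDl u v w : Q (v + w) u = Q v u + Q w u.
Proof. by rewrite hformC hformDr rmorphD /= -!hformC. Qed.

Lemma hformZl u a v : Q (a *: v) u = a^* * Q v u.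
Proof. by rewrite hformC hformZr rmorphM /= -hformC. Qed.

Lemma hform0l u : Q 0 u = 0.
Proof. by rewrite hformC hform0r rmorph0. Qed.

Lemma hform_sumr u (I : finType) (F : I -> 'cV[C]_n) :
  Q u (\sum_i F i) = \sum_i Q u (F i).
Proof. exact: (big_morph (Q u) (hformDr u) (hform0r u)). Qed.

Lemma hform_polar_eq0 u v : Q u u = 0 -> Q v v = 0 -> Q (u + v) (u + v) = 0 ->
  Q (u + 'i *: v) (u + 'i *: v) = 0 -> Q u v = 0.
Proof.
move=> Quu Qvv; rewrite !(hformDl, hformDr, hformZl, hformZr) Quu Qvv (hformC u v) conjCi.
rewrite !(mulr0, addr0, add0r) => /eqP; rewrite addrC addr_eq0 => /eqP ->.
rewrite mulrN mulNr opprK -mulr2n => /eqP; rewrite mulrn_eq0 /= mulf_eq0.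
by rewrite (negbTE (neq0Ci C)) => /eqP.
Qed.

Lemma exists_aniso : nondegenerate_form Q -> (0 < n)%N -> exists e, Q e e != 0.
Proof.
move=> hnd n_gt0; apply: contrapT => /forallNP all_iso.
have Qxx x : Q x x = 0 by apply: contrapT => /eqP; apply: all_iso.
have delta0 : delta_mx (Ordinal n_gt0) (0 : 'I_1) = 0 :> 'cV[C]_n.
  by apply: hnd => v; apply: hform_polar_eq0; rewrite Qxx.
by move/matrixP/(_ (Ordinal n_gt0) 0)/eqP: delta0; rewrite !mxE !eqxx oner_eq0.
Qed.

Lemma exists_aniso_shift e y : Q e e != 0 ->
  exists2 k, (0 < k)%N & Q (e + k%:R *: y) (e + k%:R *: y) != 0.
Proof.
move=> Qee; pose q k := Q (e + k%:R *: y) (e + k%:R *: y).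
have qE k : q k = Q e e + k%:R * (Q e y + Q y e) + k%:R ^+ 2 * Q y y.
  by rewrite /q !(hformDl, hformDr, hformZl, hformZr) conjC_nat; ring.
(* A quadratic polynomial is determined by its values at 1, 2, 3. *)
have q0 : Q e e = 3%:R * q 1%N - 3%:R * q 2%N + q 3%N by rewrite !qE; ring.
move: Qee; rewrite q0; have [-> | ] := eqVneq (q 1%N) 0; last by exists 1%N.
have [-> | ] := eqVneq (q 2%N) 0; last by exists 2%N.
have [-> | ] := eqVneq (q 3%N) 0; last by exists 3%N.
by rewrite !mulr0 subrr addr0 eqxx.
Qed.

Lemma exists_aniso_not_orthogonal u : nondegenerate_form Q -> (0 < n)%N -> u != 0 ->
  exists a, Q a a != 0 /\ Q a u != 0.
Proof.
move=> hnd n_gt0 u0.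
have [y Quy] : exists y, Q u y != 0.
  apply: contra_neqP u0 => /forallNP Qu0; apply: hnd => v.
  by apply: contrapT => /eqP; apply: Qu0.
have [e Qee] := exists_aniso hnd n_gt0.
have [Qeu | ] := eqVneq (Q e u) 0; last by exists e.
have [k k_gt0 Qek] := exists_aniso_shift y Qee; exists (e + k%:R *: y); split=> //.
rewrite hformDl hformZl Qeu add0r conjC_nat (hformC u y).
by rewrite mulf_neq0 ?pnatr_eq0 -?lt0n ?conjC_eq0.
Qed.

Lemma exists_aniso_orthogonal a b : nondegenerate_form Q -> (3 <= n)%N ->
  (forall x, exists y al be, [/\ x = y + al *: a + be *: b, Q a y = 0 & Q b y = 0]) ->
  exists y, [/\ Q y y != 0, Q a y = 0 & Q b y = 0].
Proof.
(* Otherwise the common orthogonal W of a and b is totally isotropic, hence in the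
   radical of Q, and a, b would span the whole space. *)
move=> hnd n_ge3 decomp; apply: contrapT => /forallNP no_aniso.
pose W y := Q a y = 0 /\ Q b y = 0.
have WD y z : W y -> W z -> W (y + z).
  by case=> Qay Qby [Qaz Qbz]; rewrite /W !hformDr Qay Qby Qaz Qbz addr0.
have WZ c y : W y -> W (c *: y).
  by case=> Qay Qby; rewrite /W !hformZr Qay Qby mulr0.
have W_iso y : W y -> Q y y = 0.
  by case=> Qay Qby; apply: contrapT => /eqP Qyy; apply: (no_aniso y).
have W_orth y z : W y -> W z -> Q y z = 0.
  by move=> Wy Wz; apply: hform_polar_eq0; apply: W_iso; auto.
have W0 y : W y -> y = 0.
  move=> Wy; apply: hnd => x; have [z [al [be [-> Qaz Qbz]]]] := decomp x.
  rewrite !(hformDr, hformZr) (hformC a y) (hformC b y) Wy.1 Wy.2.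
  by rewrite W_orth // conjC0 !mulr0 !addr0.
have /(leq_trans n_ge3) // : (n <= 2)%N.
apply: (leq_dim_span2 (a := a) (b := b)) => x.
by have [y [al [be [-> Qay Qby]]]] := decomp x; exists al, be; rewrite (W0 y) ?add0r.
Qed.

Definition oproj a x := x - (Q a x / Q a a) *: a.

Lemma hform_oproj a x : Q a a != 0 -> Q a (oproj a x) = 0.
Proof. by move=> Qaa; rewrite hformBr hformZr divfK // subrr. Qed.

Lemma exists_aniso_orthogonal1 a : nondegenerate_form Q -> (3 <= n)%N ->
  Q a a != 0 -> exists b, Q b b != 0 /\ Q a b = 0.
Proof.
move=> hnd n_ge3 Qaa; have [|b [Qbb Qab _]] := @exists_aniso_orthogonal a 0 hnd n_ge3.
  move=> x; exists (oproj a x), (Q a x / Q a a), 0.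
  by rewrite hform_oproj // hform0l scaler0 addr0 subrK.
by exists b.
Qed.

Lemma exists_aniso_orthogonal2 a b : nondegenerate_form Q -> (3 <= n)%N ->
  Q a a != 0 -> Q b b != 0 -> Q a b = 0 ->
  exists c, [/\ Q c c != 0, Q a c = 0 & Q b c = 0].
Proof.
move=> hnd n_ge3 Qaa Qbb Qab; apply: exists_aniso_orthogonal => // x.
exists (oproj b (oproj a x)), (Q a x / Q a a), (Q b (oproj a x) / Q b b).
split; last exact: hform_oproj.
- by rewrite addrAC !subrK.
- by rewrite hformBr hformZr Qab mulr0 subr0 hform_oproj.
Qed.

Definition form_row a : 'rV[C]_n := \row_j Q a (delta_mx j 0).

Lemma form_rowE a u : form_row a *m u = (Q a u)%:M.
Proof.
apply/matrixP => i j; rewrite !ord1 !mxE eqxx mulr1n.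
rewrite {2}[u]matrix_sum_delta hform_sumr; apply: eq_bigr => k _.
by rewrite big_ord1 hformZr mxE mulrC.
Qed.

Definition qrefl a l : 'M[C]_n := 1%:M + ((l - 1) / Q a a) *: (a *m form_row a).

Lemma qreflE a l u : qrefl a l *m u = u + ((l - 1) / Q a a * Q a u) *: a.
Proof.
by rewrite mulmxDl mul1mx -scalemxAl -mulmxA form_rowE mul_mx_scalar scalerA.
Qed.

Lemma det_qrefl a l : Q a a != 0 -> \det (qrefl a l) = l.
Proof.
move=> Qaa; rewrite /qrefl scalemxAl det1D_rank1 -scalemxAr form_rowE !mxE eqxx mulr1n.
by rewrite divfK // addrC subrK.
Qed.

Lemma qrefl_isometry a l u v : Q a a != 0 -> l^* * l = 1 ->
  Q (qrefl a l *m u) (qrefl a l *m v) = Q u v.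
Proof.
move=> Qaa ll1; rewrite !qreflE !(hformDl, hformDr, hformZl, hformZr).
rewrite (hformC a u) !(rmorphM, rmorphB, rmorph1, fmorphV) /= -(hformC a a).
rewrite -addrA -[RHS]addr0; congr (_ + _).
set x := (Q a u)^*; set y := Q a v; set q := Q a a.
transitivity ((l^* * l - 1) * (x * y / q)); first by field.
by rewrite ll1 subrr mul0r.
Qed.

Lemma qrefl_pair_SU a b l : Q a a != 0 -> Q b b != 0 -> l^* * l = 1 ->
  in_SU Q (qrefl a l *m qrefl b l^*).
Proof.
move=> Qaa Qbb ll1; split; first by rewrite det_mulmx !det_qrefl // mulrC.
by move=> u v; rewrite -!mulmxA !qrefl_isometry // conjCK mulrC.
Qed.

Lemma qrefl_pair_sub a b l u : Q a b = 0 ->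
  qrefl a l *m qrefl b l^* *m u - u =
  ((l - 1) / Q a a * Q a u) *: a + ((l^* - 1) / Q b b * Q b u) *: b.
Proof.
move=> Qab; rewrite -mulmxA !qreflE hformDr hformZr Qab mulr0 addr0.
by rewrite -addrA addrC addrA subrK.
Qed.

End HermitianForm.

Lemma exists_unimodular_norm_sub1 (R : realType) (r : R) : 0 <= r <= 4 ->
  exists l : R[i], l^* * l = 1 /\ (l^* - 1) * (l - 1) = (r%:C)%C.
Proof.
(* |l - 1|^2 = 2 - 2 Re l, so take Re l = 1 - r / 2 *)
case/andP => r_ge0 r_le4; pose c := 1 - r / 2; pose s := Num.sqrt (1 - c ^+ 2).
have s2 : s ^+ 2 = 1 - c ^+ 2 by rewrite sqr_sqrtr // /c; nra.
exists (Complex c s); rewrite -[(Complex c s)^*]/(Complex c (- s)).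
split; apply/eqP; rewrite eq_complex /= -!expr2; apply/andP; split; apply/eqP.
- by rewrite mulNr opprK -expr2 s2 addrC subrK.
- by ring.
- by rewrite !subr0 mulNr opprK -expr2 s2 /c; field.
- by ring.
Qed.

Section UnitCircleSubgroup.
Variables (R : realType) (H : R[i] -> Prop).
Hypothesis hH : additive_subgroup H.
Hypothesis hM : forall z l m, H z -> l^* * l = 1 -> m^* * m = 1 -> H ((m - 1) * (l - 1) * z).

Lemma circle_subgroupM_small (r : R) z : 0 <= r <= 4 -> H z -> H ((r%:C)%C * z).
Proof.
move=> /exists_unimodular_norm_sub1[l [ll1 <-]] Hz.
by apply: hM => //; rewrite conjCK mulrC.
Qed.

Lemma circle_subgroupMreal (r : R) z : H z -> H ((r%:C)%C * z).
Proof.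
move=> Hz; wlog r_ge0 : r / 0 <= r.
  move=> hw; have [/hw // | /ltW] := lerP 0 r.
  by rewrite -oppr_ge0 => /hw/(subgroupN hH); rewrite rmorphN mulNr opprK.
pose k := (Num.Def.archi_bound r).+1.
have k_gt0 : (0 : R) < k%:R by rewrite ltr0n.
have r_lt_k : r < k%:R.
  by apply: lt_le_trans (archi_boundP r_ge0) _; rewrite ler_nat.
have := subgroupMn hH k (@circle_subgroupM_small (r / k%:R) _ _ Hz).
rewrite -mulrnAl -rmorphMn /= -[(_ / _) *+ k]mulr_natr divfK ?gt_eqF //; apply.
by rewrite divr_ge0 ?ler0n //= ler_pdivrMr //; lra.
Qed.

Lemma circle_subgroupMi z : H z -> H ('i * z).
Proof.
have ii1 : 'i^* * 'i = 1 :> R[i] by rewrite conjCi mulNr -expr2 sqrCi opprK.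
(* ('i - 1)^2 = -2 'i *)
move=> /hM/(_ ii1 ii1)/(circle_subgroupMreal (- 2^-1)); congr H.
rewrite !mulrA; congr (_ * _).
by rewrite -mulrA -expr2 sqrrB sqrCi rmorphN fmorphV rmorph_nat; field.
Qed.

Lemma circle_subgroup_full z0 : H z0 -> z0 != 0 -> forall w, H w.
Proof.
move=> Hz0 z0_neq0 w; rewrite -(divfK z0_neq0 w); case: (w / z0) => x y.
have -> : Complex x y = (x%:C)%C + 'i * (y%:C)%C.
  by apply/eqP; rewrite eq_complex /=; apply/andP; split; apply/eqP; ring.
rewrite mulrDl -mulrA; apply: (subgroupD hH); last apply: circle_subgroupMi;
  exact: circle_subgroupMreal.
Qed.

End UnitCircleSubgroup.

Section InvariantSubgroup.
Variables (R : realType) (N : nat) (Q : 'cV[R[i]]_N -> 'cV[R[i]]_N -> R[i]).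
Hypotheses (hN : (3 <= N)%N) (hQ : herm_form Q) (hnd : nondegenerate_form Q).
Variable G : 'cV[R[i]]_N -> Prop.
Hypothesis hG : additive_subgroup G.
Hypothesis hinv : forall g, in_SU Q g -> forall v, G v -> G (g *m v).

Lemma mem_double_commutator a b c l m u :
  Q a a != 0 -> Q b b != 0 -> Q c c != 0 -> Q a b = 0 -> Q a c = 0 -> Q b c = 0 ->
  l^* * l = 1 -> m^* * m = 1 -> G u ->
  G (((m - 1) * (l - 1) * (Q a u / Q a a)) *: a).
Proof.
move=> Qaa Qbb Qcc Qab Qac Qbc ll1 mm1 Gu.
have := subgroupB hG (hinv (qrefl_pair_SU hQ Qaa Qbb ll1) Gu) Gu.
rewrite qrefl_pair_sub //; set w := _ + _ => Gw.
have := subgroupB hG (hinv (qrefl_pair_SU hQ Qaa Qcc mm1) Gw) Gw.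
have Qaw : Q a w = (l - 1) * Q a u.
  by rewrite (hformDr hQ) !(hformZr hQ) Qab mulr0 addr0; field.
have Qcw : Q c w = 0.
  rewrite (hformDr hQ) !(hformZr hQ) (hformC hQ a c) (hformC hQ b c) Qac Qbc conjC0.
  by rewrite !mulr0 addr0.
rewrite qrefl_pair_sub // Qaw Qcw mulr0 scale0r addr0.
by congr (G (_ *: a)); field.
Qed.

Lemma mem_line a u : Q a a != 0 -> G u -> Q a u != 0 -> forall z, G (z *: a).
Proof.
move=> Qaa Gu Qau.
have [b [Qbb Qab]] := exists_aniso_orthogonal1 hQ hnd hN Qaa.
have [c [Qcc Qac Qbc]] := exists_aniso_orthogonal2 hQ hnd hN Qaa Qbb Qab.
have unimod_N1 : (-1 : R[i])^* * (-1) = 1 by rewrite rmorphN1 mulN1r opprK.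
apply: (@circle_subgroup_full R (fun z => G (z *: a))).
- split=> [|x y Gx Gy]; first by rewrite scale0r; apply: subgroup0 hG.
  by rewrite scalerBl; apply: subgroupB.
- move=> z l m Gz ll1 mm1.
  have := mem_double_commutator Qaa Qbb Qcc Qab Qac Qbc ll1 mm1 Gz.
  by rewrite (hformZr hQ) mulfK.
- exact: (mem_double_commutator Qaa Qbb Qcc Qab Qac Qbc unimod_N1 unimod_N1 Gu).
- have N2_neq0 : (-1 - 1 : R[i]) != 0 by rewrite -opprD oppr_eq0 -mulr2n pnatr_eq0.
  by rewrite !mulf_neq0 ?invr_eq0.
Qed.

Lemma mem_lines a0 : Q a0 a0 != 0 -> (forall z, G (z *: a0)) ->
  forall a, Q a a != 0 -> forall z, G (z *: a).
Proof.
move=> Qa0 line0 a Qaa; have Ga0 : G a0 by rewrite -[a0]scale1r.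
have [Qaa0 | ] := eqVneq (Q a a0) 0; last exact: mem_line.
(* pass through an anisotropic vector orthogonal to neither a0 nor a *)
have [k k_gt0 Qa1] := exists_aniso_shift hQ a Qa0.
have k_neq0 : (k%:R : R[i]) != 0 by rewrite pnatr_eq0 -lt0n.
have Ga1 : G (a0 + k%:R *: a).
  rewrite -[_ + _]scale1r; apply: (mem_line Qa1 Ga0).
  by rewrite (hformDl hQ) (hformZl hQ) Qaa0 mulr0 addr0.
by apply: (mem_line Qaa Ga1); rewrite (hformDr hQ) (hformZr hQ) Qaa0 add0r mulf_neq0.
Qed.

Lemma mem_of_lines : (forall a, Q a a != 0 -> forall z, G (z *: a)) -> forall x, G x.
Proof.
move=> lines x; have [e Qee] := exists_aniso hQ hnd (ltnW (ltnW hN)).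
have [k k_gt0 Qek] := exists_aniso_shift hQ x Qee.
have k_neq0 : (k%:R : R[i]) != 0 by rewrite pnatr_eq0 -lt0n.
(* x = k^-1 (e + k x) - k^-1 e *)
have := subgroupB hG (lines _ Qek k%:R^-1) (lines _ Qee k%:R^-1).
by rewrite -scalerBr addrC addKr scalerA mulVf // scale1r.
Qed.

Lemma subgroup_full u : G u -> u != 0 -> forall v, G v.
Proof.
move=> Gu u_neq0.
have [a [Qaa Qau]] := exists_aniso_not_orthogonal hQ hnd (ltnW (ltnW hN)) u_neq0.
exact/mem_of_lines/(mem_lines Qaa)/(mem_line Qaa Gu Qau).
Qed.

End InvariantSubgroup.

Theorem mainTheorem8 (R : realType) (N : nat) (hN : (3 <= N)%N)
  (Q : 'cV[R[i]]_N -> 'cV[R[i]]_N -> R[i])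
  (hQ : herm_form Q) (hnd : nondegenerate_form Q)
  (G : 'cV[R[i]]_N -> Prop) (hG : additive_subgroup G)
  (hinv : forall g : 'M[R[i]]_N, in_SU Q g -> forall v, G v -> G (g *m v)) :
  (forall v, G v <-> v = 0) \/ (forall v, G v).
Proof.
have [[u [Gu u_neq0]] | G_trivial] := pselect (exists u, G u /\ u != 0).
  by right; apply: (subgroup_full hN hQ hnd hG hinv Gu u_neq0).
left=> v; split=> [Gv | ->]; last exact: subgroup0.
by apply: (contra_notP _ G_trivial) => /eqP v_neq0; exists v.
Qed.
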